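(* For every $q\ge2$, $\beta>0$, every odd integer $L$ and every finite $d$-dimensional cube $V\subset\mathbb{Z}^d$, $\lambda(\boldsymbol{I}_{\rm SW})\ge\lambda(\boldsymbol{I}_\mathcal{D})$.
   Context: Potts measure with free boundary on $G=(V,E)$: $\pi(\sigma)\propto\exp(\beta\,\#\{(u,v)\in E:\sigma(u)=\sigma(v)\})$; $p=1-e^{-\beta}$. Tilings: for $x\in\{0,\dots,L+2\}^d$, $C(x)$ is the union over $h\in\mathbb{Z}^d$ of the cubes $\{y:\|y-(x+(L+3)h)\|_\infty\le(L-1)/2\}$; $B_x=C(x)\cap V$, listed as $\mathcal{D}=\{B_1,\dots,B_m\}$, $m=(L+3)^d$. Isolated vertices dynamics $\boldsymbol{I}_{\rm SW}$: from $\sigma_t$, include each edge with equal endpoint spins independently with probability $p$ to get $A_t$; give each isolated vertex of $(V,A_t)$ an independent uniform spin in $\{1,\dots,q\}$; discard edges. Isolated vertices tiled dynamics $\boldsymbol{I}_\mathcal{D}$: same first step; then pick $k\in\{1,\dots,m\}$ uniformly and give an independent uniform spin only to each isolated vertex of $(V,A_t)$ lying in $B_k$; discard edges. $\lambda(P)=1-\max\{|\lambda_2|,|\lambda_N|\}$ for reversible $P$. *)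

From HB Require Import structures.
From mathcomp Require Import all_boot all_order all_algebra.
From Stdlib Require Import ClassicalEpsilon.
Set Implicit Arguments. Unset Strict Implicit. Unset Printing Implicit Defensive.
Import Order.TTheory GRing.Theory Num.Theory.
Local Open Scope ring_scope.

Definition decP (P : Prop) : bool :=
  if excluded_middle_informative P then true else false.

(* Vertices of the cube V = a + {0,...,n-1}^d (offset a only matters for the
   tiling); a vertex is stored by its position y relative to the corner a. *)
Definition vert (n d : nat) := {ffun 'I_d -> 'I_n}.

Definition adj (n d : nat) (u v : vert n d) : bool :=
  [exists i : 'I_d, [&& (((u i).+1 == v i) || ((v i).+1 == u i))%N &
                        [forall j : 'I_d, (j != i) ==> (u j == v j)]]].

Definition edges (n d : nat) : {set {set vert n d}} :=
  [set e | [exists u : vert n d, exists v : vert n d, adj u v && (e == [set u; v])]].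

Definition config (q n d : nat) := {ffun vert n d -> 'I_q}.

Definition eq_edges (q n d : nat) (s : config q n d) : {set {set vert n d}} :=
  [set e in edges n d | [forall u in e, forall v in e, s u == s v]].

Definition isolated (n d : nat) (A : {set {set vert n d}}) (v : vert n d) : bool :=
  [forall e in A, v \notin e].

(* Probability that percolation step from s produces A (A a subset of eq_edges s). *)
Definition perc_w (R : nzRingType) (p : R) (q n d : nat) (s : config q n d)
  (A : {set {set vert n d}}) : R :=
  p ^+ #|A| * (1 - p) ^+ (#|eq_edges s| - #|A|).

(* Probability of getting t from s when the vertices of W receive independent
   uniform spins and all other vertices keep their spin. *)
Definition resample (R : unitRingType) (q n d : nat) (s t : config q n d)
  (W : {set vert n d}) : R :=
  if [forall v, (v \notin W) ==> (t v == s v)] then (q%:R ^- #|W|) else 0.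

Definition K_SW (R : unitRingType) (p : R) (q n d : nat) (s t : config q n d) : R :=
  \sum_(A in powerset (eq_edges s))
     @perc_w R p q n d s A * @resample R q n d s t [set v | isolated A v].

Definition tile_idx (L d : nat) := {ffun 'I_d -> 'I_(L + 3)}.

Definition inC (L d : nat) (x : tile_idx L d) (y : 'I_d -> int) : Prop :=
  exists h : 'I_d -> int, forall i : 'I_d,
    `| y i - ((x i)%:Z + (L + 3)%:Z * h i) | <= ((L.-1)./2)%:Z.

Definition tile (L n d : nat) (a : 'I_d -> int) (x : tile_idx L d) : {set vert n d} :=
  [set v : vert n d | decP (inC x (fun i => a i + (v i)%:Z))].

Definition K_D (R : unitRingType) (p : R) (q n d L : nat) (a : 'I_d -> int)
  (s t : config q n d) : R :=
  (#|{: tile_idx L d}|%:R)^-1 *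
  \sum_(x : tile_idx L d) \sum_(A in powerset (eq_edges s))
     @perc_w R p q n d s A * @resample R q n d s t ([set v | isolated A v] :&: tile n a x).

Definition kmx (R : nzRingType) (S : finType) (K : S -> S -> R) : 'M[R]_#|{: S}| :=
  \matrix_(i, j) K (enum_val i) (enum_val j).

(* g = lambda(P) = 1 - max(|lambda_2|, |lambda_N|), where
   lambda_1 >= lambda_2 >= ... >= lambda_N are the eigenvalues of P
   (roots of the characteristic polynomial, with multiplicity). *)
Definition spectral_gap (R : rcfType) (N : nat) (P : 'M[R]_N) (g : R) : Prop :=
  exists s : seq R,
    [/\ sorted >=%R s,
        char_poly P = \prod_(x <- s) ('X - x%:P) &
        g = 1 - Num.max `|s`_1| `|s`_(N.-1)| ].

(* Weight each spin configuration by the Potts measure pi.  Both dynamics are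
   reversible: pi(s) K(s,t) is a nonnegative combination, over edge sets A, of
   the resampling kernels R_W(s,t) (fresh uniform spins on W), restricted to
   pairs s, t in which every edge of A is monochromatic; for I_SW one takes
   W = isol A, for I_D the average over the tiles x of W = isol A :&: B_x.
   Conjugating by diag(sqrt pi) therefore turns both kernels into symmetric
   matrices built from the same congruences.  The R_W are symmetric and satisfy
   R_W R_U = R_(W :|: U), so they are orthogonal projections and R_J - R_I is
   positive semidefinite when J is a subset of I.  Hence the symmetrised I_SW is
   positive semidefinite and lies below the symmetrised I_D; by Courant-Fischer
   the second eigenvalue of I_SW is at most that of I_D, and nonnegativity of the
   spectrum makes the spectral gap equal to one minus the second eigenvalue. *)

From HB Require Import structures.
From mathcomp Require Import all_boot all_order all_algebra.
From mathcomp Require Import sesquilinear spectral.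
From mathcomp.real_closed Require Import complex.
From mathcomp Require Import ring.
Set Implicit Arguments. Unset Strict Implicit. Unset Printing Implicit Defensive.
Import Order.TTheory GRing.Theory Num.Theory.
Local Open Scope ring_scope.
Local Open Scope sesquilinear_scope.

Lemma char_poly_similar (R : comUnitRingType) n (P A : 'M[R]_n) :
  P \in unitmx -> char_poly (invmx P *m A *m P) = char_poly A.
Proof.
move=> Pu; rewrite /char_poly.
set Q := map_mx polyC P; set Qi := map_mx polyC (invmx P).
have QiQ : Qi *m Q = 1%:M by rewrite -map_mxM mulVmx // map_mx1.
have -> : char_poly_mx (invmx P *m A *m P) = Qi *m char_poly_mx A *m Q.
  rewrite /char_poly_mx mulmxBr mulmxBl !map_mxM -/Q -/Qi.
  by congr (_ - _); rewrite -mulmxA -scalar_mxC mulmxA QiQ mul1mx.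
by rewrite !det_mulmx mulrC mulrA -det_mulmx (mulmx1C QiQ) det1 mul1r.
Qed.

Section PsdMatrix.
Variable R : rcfType.
Local Notation C := R[i].
Local Notation toC := (real_complex R).

Definition mxC m n (M : 'M[R]_(m, n)) : 'M[C]_(m, n) := map_mx toC M.

Definition qform n (M : 'M[R]_n) (z : 'rV[C]_n) : C := (z *m mxC M *m z^t*) 0 0.

(* Tested on complex vectors, where the spectral theorem of [spectral] lives. *)
Definition psdmx n (M : 'M[R]_n) := forall z, 0 <= qform M z.

Lemma mxC_trC m n (M : 'M[R]_(m, n)) : (mxC M)^t* = mxC M^T.
Proof.
apply/matrixP=> i j; rewrite !mxE; apply: conj_Creal.
by apply/complex_realP; exists (M j i).
Qed.

Lemma qformD n (A B : 'M[R]_n) z : qform (A + B) z = qform A z + qform B z.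
Proof. by rewrite /qform /mxC map_mxD mulmxDr mulmxDl mxE. Qed.

Lemma qformB n (A B : 'M[R]_n) z : qform (A - B) z = qform A z - qform B z.
Proof. by rewrite qformD [qform (- B) z]/qform /mxC map_mxN mulmxN mulNmx mxE. Qed.

Lemma qformZ n a (A : 'M[R]_n) z : qform (a *: A) z = toC a * qform A z.
Proof. by rewrite /qform /mxC map_mxZ -scalemxAr -scalemxAl mxE. Qed.

Lemma qform_sum n I (r : seq I) (P : pred I) (F : I -> 'M[R]_n) z :
  qform (\sum_(i <- r | P i) F i) z = \sum_(i <- r | P i) qform (F i) z.
Proof.
elim/big_rec2: _ => [|i y M _ <-]; last by rewrite qformD.
by rewrite /qform /mxC map_mx0 mulmx0 mul0mx mxE.
Qed.

Lemma qform_congr m n (Y : 'M[R]_(m, n)) (M : 'M[R]_m) z :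
  qform (Y^T *m M *m Y) z = qform M (z *m mxC Y^T).
Proof. by rewrite /qform /mxC !map_mxM trmx_mul map_mxM -/(mxC _) mxC_trC trmxK !mulmxA. Qed.

Lemma psdmx1 n : psdmx (1%:M : 'M[R]_n).
Proof.
move=> z; rewrite /qform /mxC map_mx1 mulmx1 mxE sumr_ge0 // => i _.
by rewrite !mxE mul_conjC_ge0.
Qed.

Lemma psdmx_congr m n (Y : 'M[R]_(m, n)) (M : 'M[R]_m) :
  psdmx M -> psdmx (Y^T *m M *m Y).
Proof. by move=> PM z; rewrite qform_congr. Qed.

Lemma psdmx_trmx_mul m n (X : 'M[R]_(m, n)) : psdmx (X^T *m X).
Proof. by have := psdmx_congr X (@psdmx1 m); rewrite mulmx1. Qed.

Lemma psdmxD n (A B : 'M[R]_n) : psdmx A -> psdmx B -> psdmx (A + B).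
Proof. by move=> PA PB z; rewrite qformD addr_ge0. Qed.

Lemma psdmx_sum n I (r : seq I) (P : pred I) (c : I -> R) (F : I -> 'M[R]_n) :
  (forall i, P i -> 0 <= c i) -> (forall i, P i -> psdmx (F i)) ->
  psdmx (\sum_(i <- r | P i) c i *: F i).
Proof.
move=> c0 PF z; rewrite qform_sum sumr_ge0 // => i Pi.
by rewrite qformZ mulr_ge0 ?PF // ler0c c0.
Qed.

Lemma trmx_sum_congr n I (r : seq I) (c : I -> R) (Y M : I -> 'M[R]_n) :
  (forall i, (Y i)^T = Y i) -> (forall i, (M i)^T = M i) ->
  (\sum_(i <- r) c i *: (Y i *m M i *m Y i))^T = \sum_(i <- r) c i *: (Y i *m M i *m Y i).
Proof.
move=> YT MT; rewrite raddf_sum; apply: eq_bigr => i _ /=.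
by rewrite -mul_scalar_mx trmx_mul tr_scalar_mx -scalar_mxC !trmx_mul YT MT mulmxA.
Qed.

Lemma psdmx_sum_congr n I (r : seq I) (c : I -> R) (Y M : I -> 'M[R]_n) :
  (forall i, 0 <= c i) -> (forall i, (Y i)^T = Y i) -> (forall i, psdmx (M i)) ->
  psdmx (\sum_(i <- r) c i *: (Y i *m M i *m Y i)).
Proof.
move=> c0 YT PM; apply: psdmx_sum => // i _; rewrite -{1}YT; exact: psdmx_congr.
Qed.

(* The rows of U are orthonormal eigenvectors of M, row k for eigenvalue d k. *)
Definition eigen_decomp n (M : 'M[R]_n) (U : 'M[C]_n) (d : 'I_n -> R) :=
  [/\ U \is unitarymx,
      forall z, qform M z = \sum_k toC (d k) * `|(z *m U^t*) 0 k| ^+ 2 &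
      char_poly M = \prod_k ('X - (d k)%:P)].

Lemma sym_eigen_decomp n (M : 'M[R]_n) :
  M^T = M -> exists U d, eigen_decomp M U d.
Proof.
move=> MT; have herm : mxC M \is hermsymmx.
  by apply/is_hermitianmxP; rewrite expr0 scale1r mxC_trC MT.
have /orthomx_spectralP eqM := hermitian_normalmx herm.
set U := spectralmx (mxC M) in eqM; set D := spectral_diag (mxC M) in eqM.
have Uu : U \is unitarymx := spectral_unitarymx _.
have /mxOverP Dreal := hermitian_spectral_diag_real herm.
have DE k : D 0 k = toC (complex.Re (D 0 k)) by rewrite RRe_real ?Dreal.
exists U, (fun k => complex.Re (D 0 k)); split => // [z|].
  have cE : U *m z^t* = (z *m U^t*)^t* by rewrite trmx_mul map_mxM trmxCK.
  rewrite /qform eqM invmx_unitary // -[z *m _ *m _]mulmxA !mulmxA.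
  rewrite -(mulmxA _ U) cE mxE; apply: eq_bigr => k _.
  by rewrite mul_mx_diag !mxE -DE normCK mulrAC mulrC.
apply: (map_poly_inj toC).
rewrite map_char_poly -/(mxC M) eqM char_poly_similar ?unitarymx_unit //.
rewrite char_poly_trig ?diag_mx_is_trig // rmorph_prod; apply: eq_bigr => k _.
by rewrite rmorphB /= map_polyX map_polyC /= mxE eqxx mulr1n -DE.
Qed.

Lemma dotmx_unitary n (U : 'M[C]_n) z :
  U \is unitarymx -> dotmx z z = \sum_k `|(z *m U^t*) 0 k| ^+ 2.
Proof.
move=> /unitarymxP/mulmx1C UtU; rewrite dotmxE.
have -> : z *m z^t* = (z *m U^t*) *m (z *m U^t*)^t*.
  by rewrite trmx_mul map_mxM trmxCK mulmxA -(mulmxA z) UtU mulmx1.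
by rewrite mxE; apply: eq_bigr => k _; rewrite !mxE normCK.
Qed.

Lemma eigen_decomp_psd_ge0 n (M : 'M[R]_n) U d :
  eigen_decomp M U d -> psdmx M -> forall k, 0 <= d k.
Proof.
move=> [Uu qM _] PM k; have := PM (delta_mx 0 k *m U).
rewrite qM mulmxtVK // (bigD1 k) //= big1 => [|j jk]; last first.
  by rewrite mxE (negbTE jk) andbF normr0 expr0n mulr0.
by rewrite addr0 mxE !eqxx normr1 expr1n mulr1 -(rmorph0 toC) lecR.
Qed.

Lemma eigen_qform_ge n (M : 'M[R]_n) U d (l : R) z : eigen_decomp M U d ->
  (forall k, (z *m U^t*) 0 k != 0 -> l <= d k) -> toC l * dotmx z z <= qform M z.
Proof.
move=> [Uu qM _] hl; rewrite qM (dotmx_unitary z Uu) mulr_sumr.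
apply: ler_sum => k _; have [->|zk] := eqVneq ((z *m U^t*) 0 k) 0.
  by rewrite normr0 expr0n !mulr0.
by rewrite ler_wpM2r ?exprn_ge0 // lecR hl.
Qed.

Lemma eigen_qform_le n (M : 'M[R]_n) U d (l : R) z : eigen_decomp M U d ->
  (forall k, (z *m U^t*) 0 k != 0 -> d k <= l) -> qform M z <= toC l * dotmx z z.
Proof.
move=> [Uu qM _] hl; rewrite qM (dotmx_unitary z Uu) mulr_sumr.
apply: ler_sum => k _; have [->|zk] := eqVneq ((z *m U^t*) 0 k) 0.
  by rewrite normr0 expr0n !mulr0.
by rewrite ler_wpM2r ?exprn_ge0 // lecR hl.
Qed.

Lemma exists_span2_orthogonal n (UA UB : 'M[C]_n) (i1 i2 j : 'I_n) :
  UA \is unitarymx -> i1 != i2 ->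
  exists2 z : 'rV[C]_n, z != 0 &
    (forall k, (z *m UA^t*) 0 k != 0 -> (k == i1) || (k == i2))
    /\ (z *m UB^t*) 0 j = 0.
Proof.
move=> UAu i12; pose W := UA *m UB^t*; pose x := W i1 j; pose y := W i2 j.
pose a := if x == 0 then 1 else y; pose b := if x == 0 then 0 else - x.
have ab0 : (a != 0) || (b != 0).
  by rewrite /a /b; have [_|x0] := eqVneq x 0; rewrite ?oner_eq0 // oppr_eq0 x0 orbT.
have abW : a * x + b * y = 0.
  rewrite /a /b; have [->|_] := eqVneq x 0; first by rewrite mulr0 mul0r addr0.
  by rewrite mulrC mulNr addrN.
pose c : 'rV[C]_n := a *: delta_mx 0 i1 + b *: delta_mx 0 i2.
have cE k : c 0 k = a * (k == i1)%:R + b * (k == i2)%:R by rewrite !mxE.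
exists (c *m UA); rewrite ?mulmxtVK //; last split.
- apply: contraTneq ab0 => c0; have /rowP c0k := mulmxtVK c UAu.
  rewrite c0 mul0mx in c0k.
  have := c0k i1; have := c0k i2; rewrite !cE !mxE !eqxx eq_sym (negbTE i12).
  by rewrite !mulr0 !mulr1 add0r addr0 => <- <-; rewrite eqxx.
- by move=> k; rewrite cE; case: (k == i1); case: (k == i2); rewrite ?mulr0 ?addr0 ?eqxx.
- by rewrite -mulmxA mulmxDl -!scalemxAl -!rowE -abW /x /y /W !mxE.
Qed.

(* Courant-Fischer: test A <= B on a vector spanned by the eigenvectors i1, i2
   of A and orthogonal to the eigenvector j of B. *)
Lemma eigen_psd_le n (A B : 'M[R]_n) UA UB dA dB (i1 i2 j : 'I_n) (l l' : R) :
  eigen_decomp A UA dA -> eigen_decomp B UB dB -> psdmx (B - A) ->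
  i1 != i2 -> l <= dA i1 -> l <= dA i2 -> (forall k, k != j -> dB k <= l') ->
  l <= l'.
Proof.
move=> eA eB PBA i12 l1 l2 hB; have [UAu _ _] := eA.
have [z z0 [zA zB]] := exists_span2_orthogonal UB j UAu i12.
have lo : toC l * dotmx z z <= qform A z.
  by apply: eigen_qform_ge eA _ => k /zA /orP [] /eqP ->.
have up : qform B z <= toC l' * dotmx z z.
  apply: eigen_qform_le eB _ => k zk; apply: hB.
  by apply: contraNneq zk => ->; rewrite zB.
have AB : qform A z <= qform B z by rewrite -subr_ge0 -qformB.
rewrite -lecR -(ler_pM2r (_ : 0 < dotmx z z)) ?dnorm_gt0 //.
exact: le_trans lo (le_trans AB up).
Qed.

Lemma sort_spectrum n (d : 'I_n -> R) : (1 < n)%N ->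
  exists s : seq R,
  [/\ sorted >=%R s, size s = n, {subset s <= codom d},
      \prod_k ('X - (d k)%:P) = \prod_(x <- s) ('X - x%:P) &
      exists i1 i2, [/\ i1 != i2, s`_1 <= d i1, s`_1 <= d i2 &
                        forall k, k != i1 -> d k <= s`_1]].
Proof.
move=> n1; pose idx := sort (fun i j : 'I_n => d j <= d i) (enum 'I_n).
have sz_idx : size idx = n by rewrite size_sort size_enum_ord.
have uniq_idx : uniq idx by rewrite sort_uniq enum_uniq.
have sorted_s : sorted >=%R (map d idx).
  by rewrite sorted_map; apply: sort_sorted => i j /=; exact: le_total.
have i0 : 'I_n by exists 0%N; apply: ltnW.
have sE m : (m < n)%N -> (map d idx)`_m = d (nth i0 idx m).
  by move=> mn; rewrite (nth_map i0) ?sz_idx.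
exists (map d idx); split => //.
- by rewrite size_map.
- by move=> x /mapP [k _ ->]; apply: codom_f.
- rewrite big_map -big_enum /=; apply: perm_big.
  by rewrite perm_sym perm_sort.
exists (nth i0 idx 0), (nth i0 idx 1); split.
- by rewrite nth_uniq // sz_idx // ltnW.
- rewrite -sE ?(ltnW n1) //; apply: (sorted_leq_nth ge_trans ge_refl 0 sorted_s);
    by rewrite ?inE ?size_map ?sz_idx ?(ltnW n1).
- by rewrite sE.
move=> k k0; have k_idx : k \in idx by rewrite mem_sort mem_enum.
set m := index k idx; have mn : (m < n)%N by rewrite -sz_idx index_mem.
have m0 : m != 0%N by apply: contra k0 => /eqP m0; rewrite -m0 /m nth_index.
have := sorted_leq_nth ge_trans ge_refl 0 sorted_s 1 m.
rewrite !inE size_map sz_idx n1 mn lt0n m0 /= => /(_ isT isT isT).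
by rewrite sE // /m nth_index.
Qed.

Lemma sorted_nonneg_max_norm (s : seq R) : (1 < size s)%N -> sorted >=%R s ->
  (forall x, x \in s -> 0 <= x) -> Num.max `|s`_1| `|s`_(size s).-1| = s`_1.
Proof.
move=> s1 s_sorted s_ge0; have lt_last : ((size s).-1 < size s)%N by rewrite prednK // ltnW.
have ge0 m : (m < size s)%N -> 0 <= s`_m by move=> ms; rewrite s_ge0 ?mem_nth.
rewrite !ger0_norm ?ge0 // max_l //.
have := sorted_leq_nth ge_trans ge_refl 0 s_sorted 1 (size s).-1.
by rewrite !inE s1 lt_last; apply=> //; case: (size s) s1 => [|[]].
Qed.

(* l is the second largest eigenvalue; the spectrum being nonnegative, the
   smallest eigenvalue does not affect the gap. *)
Lemma psd_spectral_gap n (M : 'M[R]_n) : (1 < n)%N -> M^T = M -> psdmx M ->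
  exists U d l, [/\ eigen_decomp M U d, spectral_gap M (1 - l) &
    exists i1 i2, [/\ i1 != i2, l <= d i1, l <= d i2 &
                      forall k, k != i1 -> d k <= l]].
Proof.
move=> n1 MT PM; have [U [d eM]] := sym_eigen_decomp MT.
have [s [s_sorted sz_s s_d d_s top2]] := sort_spectrum d n1.
exists U, d, s`_1; split => //; exists s; split => //; first by case: eM => _ _ ->.
rewrite -sz_s sorted_nonneg_max_norm ?sz_s //.
by move=> x /s_d /codomP [k ->]; apply: eigen_decomp_psd_ge0 eM PM k.
Qed.

Lemma psd_spectral_gap_le n (A B : 'M[R]_n) : (1 < n)%N ->
  A^T = A -> B^T = B -> psdmx A -> psdmx (B - A) ->
  exists gA gB, [/\ spectral_gap A gA, spectral_gap B gB & gB <= gA].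
Proof.
move=> n1 AT BT PA PBA.
have PB : psdmx B by rewrite -(subrK A B); apply: psdmxD.
have [UA [dA [lA [eA gapA [i1 [i2 [i12 l1 l2 _]]]]]]] := psd_spectral_gap n1 AT PA.
have [UB [dB [lB [eB gapB [j [_ [_ _ _ hB]]]]]]] := psd_spectral_gap n1 BT PB.
exists (1 - lA), (1 - lB); split => //.
by rewrite lerD2l lerN2; apply: eigen_psd_le eA eB PBA i12 l1 l2 hB.
Qed.

End PsdMatrix.

Section KernelMatrix.
Variables (R : nzRingType) (S : finType).

Definition kdiag (f : S -> R) : 'M[R]_#|{: S}| := diag_mx (\row_i f (enum_val i)).

Lemma kmxM (K1 K2 : S -> S -> R) :
  kmx K1 *m kmx K2 = kmx (fun s t => \sum_u K1 s u * K2 u t).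
Proof.
apply/matrixP => i j; rewrite !mxE (reindex enum_rank) /=; last first.
  by exists enum_val => x _; rewrite (enum_valK, enum_rankK).
by apply: eq_bigr => u _; rewrite !mxE enum_rankK.
Qed.

Lemma trmx_kdiag (f : S -> R) : (kdiag f)^T = kdiag f.
Proof. exact: tr_diag_mx. Qed.

Lemma kdiag_kmx (f g : S -> R) (K : S -> S -> R) :
  kdiag f *m kmx K *m kdiag g = kmx (fun s t => f s * K s t * g t).
Proof. by apply/matrixP => i j; rewrite mul_mx_diag mul_diag_mx !mxE. Qed.

End KernelMatrix.

Lemma prodr_nat_bool (R : comPzSemiRingType) (I : finType) (b : pred I) :
  \prod_i ((b i)%:R : R) = [forall i, b i]%:R.
Proof.
have [/forallP b1|/forallPn [i bi]] := boolP [forall i, b i].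
  by rewrite big1 // => i _; rewrite b1.
by rewrite (bigD1 i) //= (negbTE bi) mul0r.
Qed.

Lemma sumr_eq1 (R : pzSemiRingType) (I : finType) (x : I) :
  \sum_i ((i == x)%:R : R) = 1.
Proof. by rewrite (bigD1 x) //= eqxx big1 ?addr0 // => i /negbTE ->. Qed.

Section Resample.
Variables (R : fieldType) (q n d : nat).
Hypothesis q_neq0 : q%:R != 0 :> R.
Local Notation V := (vert n d).
Local Notation T := (config q n d).

Lemma resample_sym (s t : T) W : resample R s t W = resample R t s W.
Proof. by rewrite /resample; under eq_forallb => v do rewrite eq_sym. Qed.

Lemma resampleE (s t : T) (W : {set V}) :
  resample R s t W = q%:R ^- #|W| * \prod_v ((v \in W) || (t v == s v))%:R.
Proof.
rewrite prodr_nat_bool /resample.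
have -> : [forall v, (v \in W) || (t v == s v)]
        = [forall v, (v \notin W) ==> (t v == s v)].
  by apply: eq_forallb => v; rewrite implyNb.
by case: ifP; rewrite ?mulr1 ?mulr0.
Qed.

Lemma sum_resample_indicator (x y : 'I_q) (b1 b2 : bool) :
  \sum_c (((b1 || (c == x)) && (b2 || (y == c)))%:R : R)
  = (if b1 && b2 then q%:R else 1) * ((b1 || b2) || (y == x))%:R.
Proof.
case: b1; case: b2 => /=.
- by rewrite mulr1 sumr_const card_ord.
- by rewrite mul1r; under eq_bigr => c _ do rewrite eq_sym; rewrite sumr_eq1.
- by rewrite mul1r; under eq_bigr => c _ do rewrite andbT; rewrite sumr_eq1.
rewrite mul1r; have [<-|yx] := eqVneq y x.
  by under eq_bigr => c _ do rewrite [y == c]eq_sym andbb; rewrite sumr_eq1.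
by rewrite big1 // => c _; case: eqP => // ->; rewrite (negbTE yx).
Qed.

Lemma resample_comp (s t : T) (W U : {set V}) :
  \sum_u resample R s u W * resample R u t U = resample R s t (W :|: U).
Proof.
(* Summing over the intermediate configuration u factorises over vertices. *)
pose g v (c : 'I_q) : R := (((v \in W) || (c == s v)) && ((v \in U) || (t v == c)))%:R.
have split_u u : resample R s u W * resample R u t U
               = q%:R ^- #|W| * q%:R ^- #|U| * \prod_v g v (u v).
  rewrite !resampleE mulrACA -big_split /=; congr (_ * _); apply: eq_bigr => v _.
  by rewrite /g -natrM mulnb.
rewrite (eq_bigr _ (fun u _ => split_u u)) -mulr_sumr -(bigA_distr_bigA g) /=.
under eq_bigr => v _ do rewrite /g sum_resample_indicator -in_setI -in_setU.
rewrite big_split /= -big_mkcond prodr_const resampleE mulrA; congr (_ * _).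
by rewrite -invfM -exprD -cardsUI exprD invfM -mulrA mulVf ?mulr1 // expf_neq0.
Qed.
End Resample.

Section PottsWeights.
Variables (R : numFieldType) (q n d : nat) (p : R).
Hypothesis p01 : 0 < p < 1.
Local Notation V := (vert n d).
Local Notation T := (config q n d).
Local Notation ES := {set {set V}}.

(* Since (1 - p)^-1 = e^beta, this is the Potts measure up to normalisation. *)
Definition potts_weight (s : T) : R := (1 - p)^-1 ^+ #|eq_edges s|.

Definition fk_weight (A : ES) : R := (p / (1 - p)) ^+ #|A|.

Definition isol (A : ES) : {set V} := [set v | isolated A v].

Lemma potts_weight_gt0 s : 0 < potts_weight s.
Proof. by case/andP: p01 => _ p1; rewrite exprn_gt0 // invr_gt0 subr_gt0. Qed.

Lemma fk_weight_ge0 A : 0 <= fk_weight A.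
Proof. by case/andP: p01 => p0 p1; rewrite exprn_ge0 // divr_ge0 ?subr_ge0 ?ltW. Qed.

Lemma potts_weight_perc_w s (A : ES) :
  A \subset eq_edges s -> potts_weight s * perc_w p s A = fk_weight A.
Proof.
move=> sA; have p1 : 1 - p != 0 by case/andP: p01 => _ p1; rewrite subr_eq0 gt_eqF.
rewrite /potts_weight /perc_w /fk_weight -{1}(subnK (subset_leq_card sA)).
rewrite exprD !exprVn expr_div_n.
set X := (1 - p) ^+ _; set Y := (1 - p) ^+ #|A|; set P := p ^+ _.
have X0 : X != 0 by rewrite expf_neq0.
by rewrite mulrAC mulrCA mulVf ?mulr1.
Qed.

Lemma resample_isol_eq_edges (s t : T) (A : ES) (W : {set V}) :
  A \subset eq_edges s -> W \subset isol A -> resample R s t W != 0 ->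
  A \subset eq_edges t.
Proof.
rewrite /resample => sA WA; case: ifP => [/forallP tW _|]; last by rewrite eqxx.
apply/subsetP => e eA; have := subsetP sA e eA; rewrite !inE => /andP [-> /= se].
have eW u : u \in e -> t u = s u.
  move=> ue; apply/eqP; apply: (implyP (tW u)); apply: contraTN ue => /(subsetP WA).
  by rewrite inE => /forallP /(_ e); rewrite eA.
apply/forallP => u; apply/implyP => ue; apply/forallP => v; apply/implyP => ve.
by rewrite !eW //; move/forallP: se => /(_ u); rewrite ue => /forallP /(_ v); rewrite ve.
Qed.

Lemma potts_weight_perc_resample (s t : T) (W : ES -> {set V}) :
  (forall A, W A \subset isol A) ->
  potts_weight s * \sum_(A in powerset (eq_edges s)) perc_w p s A * resample R s t (W A)
  = \sum_A fk_weight A * (A \subset eq_edges s)%:R * (A \subset eq_edges t)%:R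
                       * resample R s t (W A).
Proof.
move=> WA; rewrite mulr_sumr big_mkcond /=; apply: eq_bigr => A _.
rewrite powersetE; case: ifP => sA; last by rewrite !(mulr0, mul0r).
have [->|r0] := eqVneq (resample R s t (W A)) 0; first by rewrite !mulr0.
by rewrite (resample_isol_eq_edges sA (WA A) r0) mulrA potts_weight_perc_w // !mulr1.
Qed.

End PottsWeights.

Section Symmetrization.
Variables (R : rcfType) (S : finType) (w : S -> R).
Hypothesis w_gt0 : forall s, 0 < w s.
Local Notation sqw s := (Num.sqrt (w s)).

Lemma sqw_neq0 s : sqw s != 0.
Proof. by rewrite sqrtr_eq0 -ltNge w_gt0. Qed.

(* Conjugation by diag(sqrt w); symmetric when K is reversible for w. *)
Definition symkmx (K : S -> S -> R) := kmx (fun s t => sqw s * K s t / sqw t).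

Lemma char_poly_symkmx (K : S -> S -> R) : char_poly (symkmx K) = char_poly (kmx K).
Proof.
pose D := kdiag (fun s => (sqw s)^-1).
have DiD : kdiag (fun s => sqw s) *m D = 1%:M.
  apply/matrixP => i j; rewrite mul_diag_mx !mxE.
  by case: eqP => [->|_]; rewrite ?mulfV ?sqw_neq0 ?mulr0.
have Du : D \in unitmx by case: (mulmx1_unit DiD).
have invD : invmx D = kdiag (fun s => sqw s).
  by rewrite -[RHS](mulKmx Du) (mulmx1C DiD) mulmx1.
by rewrite -(char_poly_similar (kmx K) Du) invD kdiag_kmx.
Qed.

Lemma symkmx_sum (I : finType) (K : S -> S -> R) (c : I -> R)
    (f : I -> S -> R) (P : I -> S -> S -> R) :
  (forall s t, w s * K s t = \sum_i c i * f i s * f i t * P i s t) ->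
  symkmx K = \sum_i c i *: (kdiag (fun s => f i s / sqw s) *m kmx (P i)
                   *m kdiag (fun s => f i s / sqw s)).
Proof.
move=> wK; apply/matrixP => i j; rewrite summxE !mxE.
set s := enum_val i; set t := enum_val j.
have -> : sqw s * K s t / sqw t = w s * K s t / (sqw s * sqw t).
  rewrite -{2}(sqr_sqrtr (ltW (w_gt0 s))) expr2 invfM -!mulrA; congr (_ * _).
  by rewrite mulrCA mulVKf ?sqw_neq0.
rewrite wK mulr_suml; apply: eq_bigr => k _; rewrite kdiag_kmx !mxE -/s -/t invfM; ring.
Qed.

End Symmetrization.

Lemma spectral_gap_char_poly (R : rcfType) n (A B : 'M[R]_n) g :
  char_poly A = char_poly B -> spectral_gap A g -> spectral_gap B g.
Proof. by rewrite /spectral_gap => ->. Qed.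

Section PottsComparison.
Variables (R : rcfType) (q n d L : nat) (p : R) (a : 'I_d -> int).
Hypotheses (q_gt0 : (0 < q)%N) (p01 : 0 < p < 1).
Local Notation V := (vert n d).
Local Notation T := (config q n d).
Local Notation ES := {set {set V}}.
Local Notation m := #|{: tile_idx L d}|.
Local Notation KSW := (@K_SW R p q n d).
Local Notation KD := (@K_D R p q n d L a).

Definition resample_mx (W : {set V}) := kmx (fun s t : T => resample R s t W).

Let q_neq0 : q%:R != 0 :> R.
Proof. by rewrite pnatr_eq0 -lt0n. Qed.

Lemma resample_mxM W U : resample_mx W *m resample_mx U = resample_mx (W :|: U).
Proof. by rewrite kmxM; apply/matrixP => i j; rewrite !mxE resample_comp ?q_neq0. Qed.

Lemma trmx_resample_mx W : (resample_mx W)^T = resample_mx W.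
Proof. by apply/matrixP => i j; rewrite !mxE resample_sym. Qed.

Lemma psdmx_resample_mx W : psdmx (resample_mx W).
Proof.
by have := psdmx_trmx_mul (resample_mx W); rewrite trmx_resample_mx resample_mxM setUid.
Qed.

Lemma psdmx_resample_mx_sub (J I : {set V}) :
  J \subset I -> psdmx (resample_mx J - resample_mx I).
Proof.
move=> JI; have := psdmx_trmx_mul (resample_mx J - resample_mx I).
have -> : (resample_mx J - resample_mx I)^T = resample_mx J - resample_mx I.
  by rewrite linearB /= !trmx_resample_mx.
rewrite mulmxBl !mulmxBr !resample_mxM !setUid.
by rewrite (setUidPr JI) (setUidPl JI) subrr subr0.
Qed.

Definition tiled_resample (A : ES) (s t : T) : R :=
  m%:R^-1 * \sum_(x : tile_idx L d) resample R s t (isol A :&: tile n a x).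

Local Notation eqind A s := ((A \subset eq_edges s)%:R : R).

Lemma K_SW_potts_weight (s t : T) : potts_weight p s * KSW s t
  = \sum_A fk_weight p A * eqind A s * eqind A t * resample R s t (isol A).
Proof. exact: (potts_weight_perc_resample p01 s t (W := @isol n d) (fun A => subxx _)). Qed.

Lemma K_D_potts_weight (s t : T) : potts_weight p s * KD s t
  = \sum_A fk_weight p A * eqind A s * eqind A t * tiled_resample A s t.
Proof.
rewrite /K_D mulrCA mulr_sumr.
under eq_bigr => x _ do rewrite (potts_weight_perc_resample p01 s t
  (W := fun A => isol A :&: tile n a x) (fun A => subsetIl _ _)).
rewrite exchange_big mulr_sumr; apply: eq_bigr => A _.
by rewrite /tiled_resample mulrCA !mulr_sumr.
Qed.

Lemma trmx_tiled_resample A : (kmx (tiled_resample A))^T = kmx (tiled_resample A).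
Proof.
by apply/matrixP => i j; rewrite !mxE /tiled_resample; under eq_bigr do rewrite resample_sym.
Qed.

Lemma psdmx_tiled_resample_sub A :
  psdmx (kmx (tiled_resample A) - resample_mx (isol A)).
Proof.
have m0 : m%:R != 0 :> R by rewrite pnatr_eq0 card_ffun !card_ord -lt0n expn_gt0 addn3.
have -> : kmx (tiled_resample A) - resample_mx (isol A)
    = \sum_(x : tile_idx L d)
        m%:R^-1 *: (resample_mx (isol A :&: tile n a x) - resample_mx (isol A)).
  rewrite -scaler_sumr sumrB sumr_const -scaler_nat scalerBr scalerA mulVf // scale1r.
  congr (_ - _); apply/matrixP => i j.
  by rewrite !mxE summxE; congr (_ * _); apply: eq_bigr => x _; rewrite mxE.
apply: psdmx_sum => x _; first by rewrite invr_ge0 ler0n.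
exact/psdmx_resample_mx_sub/subsetIl.
Qed.

Local Notation Y A := (kdiag (fun s : T => eqind A s / Num.sqrt (potts_weight p s))).

Lemma symkmx_K_SW : symkmx (potts_weight p) KSW
  = \sum_A fk_weight p A *: (Y A *m resample_mx (isol A) *m Y A).
Proof.
by rewrite (symkmx_sum (potts_weight_gt0 p01) K_SW_potts_weight).
Qed.

Lemma symkmx_K_D : symkmx (potts_weight p) KD
  = \sum_A fk_weight p A *: (Y A *m kmx (tiled_resample A) *m Y A).
Proof.
by rewrite (symkmx_sum (potts_weight_gt0 p01) K_D_potts_weight).
Qed.

Lemma spectral_gap_K_D_le : (1 < #|{: T}|)%N ->
  exists gSW gD : R,
    [/\ spectral_gap (kmx KSW) gSW, spectral_gap (kmx KD) gD & gD <= gSW].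
Proof.
move=> T1; have Y_sym (A : ES) : (Y A)^T = Y A by exact: trmx_kdiag.
have [||||gSW [gD [gapSW gapD le]]] := psd_spectral_gap_le T1
  (A := symkmx (potts_weight p) KSW) (B := symkmx (potts_weight p) KD).
- by rewrite symkmx_K_SW trmx_sum_congr // => A; exact: trmx_resample_mx.
- by rewrite symkmx_K_D trmx_sum_congr // => A; exact: trmx_tiled_resample.
- rewrite symkmx_K_SW; apply: psdmx_sum_congr => // A.
  + exact: fk_weight_ge0.
  + exact: psdmx_resample_mx.
- rewrite symkmx_K_D symkmx_K_SW -sumrB.
  under eq_bigr do rewrite -scalerBr -mulmxBl -mulmxBr.
  apply: psdmx_sum_congr => // A; [exact: fk_weight_ge0 | exact: psdmx_tiled_resample_sub].
have chi := char_poly_symkmx (potts_weight_gt0 p01).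
exists gSW, gD; split => //; apply: spectral_gap_char_poly; by [exact: chi | ].
Qed.
End PottsComparison.

Lemma card_config_gt1 q n d : (1 < q)%N -> (0 < n)%N -> (1 < #|{: config q n d}|)%N.
Proof.
move=> q1 n0; rewrite card_ffun !card_ffun !card_ord (leq_trans q1) //.
by rewrite -{1}(expn1 q) leq_pexp2l ?expn_gt0 ?n0 // ltnW.
Qed.

Theorem mainTheorem9 (R : rcfType) (q : nat) (p : R) (L n d : nat) (a : 'I_d -> int) :
  (2 <= q)%N -> 0 < p < 1 -> odd L -> (0 < n)%N ->
  exists gSW gD : R,
    [/\ spectral_gap (kmx (@K_SW R p q n d)) gSW,
        spectral_gap (kmx (@K_D R p q n d L a)) gD &
        gD <= gSW].
Proof.
move=> q2 p01 _ n0; apply: spectral_gap_K_D_le => //; first exact: ltnW.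
exact: card_config_gt1.
Qed.
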